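(* Let $\alpha=\exp\left(\frac{2\pi i}{5}\right)$, let $c,x\in\mathbb{C}$, let $a_1,\dots,a_p\in\mathbb{C}$ and $b_1,\dots,b_q\in\mathbb{C}\setminus\{0,-1,-2,\dots\}$, and suppose either $5p\le 5q+4$ (with $x$ arbitrary), or $p=q+1$ and $\left|\left(\frac{cx^2}{5^{1+q-p}}\right)^5\right|<1$. Then $$\sum_{k=0}^{4}\alpha^{k}\,{}_pF_q\left[\begin{array}{c}a_1,\dots,a_p;\\ b_1,\dots,b_q;\end{array}c(x\alpha^k)^2\right] =\frac{5c^2x^4}{2}\,\frac{\prod_{i=1}^{p}(a_i)_2}{\prod_{i=1}^{q}(b_i)_2}\;{}_{5p}F_{5q+4}\left[\begin{array}{c}\Big\{\tfrac{a_j+2}{5},\tfrac{a_j+3}{5},\tfrac{a_j+4}{5},\tfrac{a_j+5}{5},\tfrac{a_j+6}{5}\Big\}_{j=1}^{p};\\ \tfrac35,\tfrac45,\tfrac65,\tfrac75,\Big\{\tfrac{b_j+2}{5},\tfrac{b_j+3}{5},\tfrac{b_j+4}{5},\tfrac{b_j+5}{5},\tfrac{b_j+6}{5}\Big\}_{j=1}^{q};\end{array}\left(\frac{cx^2}{5^{1+q-p}}\right)^5\right],$$ where the braces denote the lists of parameters obtained for $j=1,\dots,p$ (resp. $j=1,\dots,q$).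
   Context: The generalized hypergeometric function is ${}_pF_q\left[\begin{array}{c}\alpha_1,\dots,\alpha_p;\\\beta_1,\dots,\beta_q;\end{array}z\right]=\sum_{n=0}^{\infty}\frac{(\alpha_1)_n\cdots(\alpha_p)_n}{(\beta_1)_n\cdots(\beta_q)_n}\frac{z^n}{n!}$, with $(\lambda)_n=\lambda(\lambda+1)\cdots(\lambda+n-1)$, $(\lambda)_0=1$; in particular $(\lambda)_2=\lambda(\lambda+1)$. Values of parameters and variables for which the expressions do not make sense are excluded. *)

From Stdlib Require Import Reals List ClassicalEpsilon Factorial.
From Coquelicot Require Import Coquelicot.
Import ListNotations.
Open Scope C_scope.

Definition Cexp (z : C) : C :=
  RtoC (exp (Re z)) * (RtoC (cos (Im z)) + Ci * RtoC (sin (Im z))).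

Fixpoint poch (l : C) (n : nat) : C :=
  match n with
  | O => 1
  | S m => poch l m * (l + RtoC (INR m))
  end.

Definition prodC (s : list C) : C := fold_right Cmult 1 s.

Definition hyp_term (a b : list C) (z : C) (n : nat) : C :=
  prodC (map (fun ai => poch ai n) a) / prodC (map (fun bi => poch bi n) b)
  * Cpow z n / RtoC (INR (fact n)).

(* value of the generalized hypergeometric series (sum of the series when it
   converges; an arbitrary value 0 otherwise) *)
Definition pFq (a b : list C) (z : C) : C :=
  match excluded_middle_informative (exists l, is_series (hyp_term a b z) l) with
  | left H => proj1_sig (constructive_indefinite_description _ H)
  | right _ => 0
  end.

Definition shift5 (u : C) : list C :=
  [ (u + 2) / 5; (u + 3) / 5; (u + 4) / 5; (u + 5) / 5; (u + 6) / 5 ].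

Definition alpha : C := Cexp (0, 2 * PI / 5)%R.

From Stdlib Require Import Reals List Lia Lra ZifyNat ClassicalEpsilon Factorial.
From Coquelicot Require Import Coquelicot.
Import ListNotations.
Open Scope C_scope.

(** Write [w = c x^2] and let [t_n(z)] be the n-th term of the pFq series.
    The k-th argument is [w α^(2k)], so [α^k t_n(w α^(2k)) = t_n(w) (α^(2n+1))^k],
    and summing over the fifth roots of unity kills every term except those with
    [2n+1 ≡ 0 (mod 5)], i.e. [n = 5m+2], which survive with weight 5.
    Gauss' multiplication formula [(u)_(5m) = 5^(5m) ∏_(j<5) ((u+j)/5)_m], applied to
    [(u)_(5m+2) = (u)_2 (u+2)_(5m)] and to [(5m+2)! = (1)_(5m+2)], turns
    [5 t_(5m+2)(w)] into the prefactor times the m-th term of the 5pF(5q+4) series;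
    for [(5m+2)!] the parameter [(1+4)/5 = 1] supplies the [m!] of that series.
    The ratio test gives the convergence of the five series on the left. *)

Lemma RtoC_neq_0 (x : R) : (x <> 0)%R -> RtoC x <> 0.
Proof. intros Hx E. apply Hx. apply (f_equal fst) in E. exact E. Qed.

Lemma C5_neq_0 : (5 : C) <> 0.
Proof. apply RtoC_neq_0. lra. Qed.

Lemma Cmult_neq_0_inv (x y : C) : x * y <> 0 -> x <> 0 /\ y <> 0.
Proof. intros H. split; intros E; apply H; rewrite E; ring. Qed.

Lemma Cplus_eq_0_opp (u v : C) : u + v = 0 -> u = - v.
Proof. intros E. replace u with (u + v - v) by ring. rewrite E. ring. Qed.

Lemma RtoC_INR_S (n : nat) : RtoC (INR (S n)) = RtoC (INR n) + 1.
Proof. rewrite S_INR, RtoC_plus. reflexivity. Qed.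

Lemma Cpow_div (w v : C) (n : nat) : v <> 0 -> Cpow (w / v) n = Cpow w n / Cpow v n.
Proof. intros Hv. unfold Cdiv. rewrite Cpow_mult_l, Cpow_inv by exact Hv. reflexivity. Qed.

Lemma Cpow_add_div (E : C) (p k q : nat) :
  E <> 0 -> (p + k = q)%nat -> Cpow E k = Cpow E q / Cpow E p.
Proof. intros HE <-. rewrite Cpow_add_r. field. apply Cpow_nz, HE. Qed.

Lemma Cmod_lt_1_of_pow (w : C) (n : nat) :
  (Cmod (Cpow w n) < 1)%R -> (Cmod w < 1)%R.
Proof.
  intros Hw. rewrite Cmod_pow in Hw.
  destruct (Rlt_le_dec (Cmod w) 1) as [Hlt | Hge]; [exact Hlt|].
  pose proof (pow_R1_Rle _ n Hge). lra.
Qed.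

Lemma is_series_C_unique (u : nat -> C) (l1 l2 : C) :
  is_series u l1 -> is_series u l2 -> l1 = l2.
Proof. apply filterlim_locally_unique. Qed.

Lemma pFq_eq a b z l : is_series (hyp_term a b z) l -> pFq a b z = l.
Proof.
  intros Hl. unfold pFq.
  destruct excluded_middle_informative as [Hex | Hnex].
  - destruct constructive_indefinite_description as [l' Hl']; cbn.
    exact (is_series_C_unique _ _ _ Hl' Hl).
  - exfalso. apply Hnex. exists l. exact Hl.
Qed.

Lemma is_series_pFq a b z :
  ex_series (hyp_term a b z) -> is_series (hyp_term a b z) (pFq a b z).
Proof. intros [l Hl]. rewrite (pFq_eq _ _ _ _ Hl). exact Hl. Qed.

Lemma is_series_C_zero : is_series (fun _ : nat => 0 : C) (0 : C).
Proof.
  apply (filterlim_ext (fun _ => 0 : C)); [|apply filterlim_const].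
  intros n. symmetry. exact (sum_n_m_const_zero 0 n).
Qed.

Lemma pFq_of_scaled_series a b z (K L : C) :
  is_series (fun n => K * hyp_term a b z n) L -> L = K * pFq a b z.
Proof.
  intros HL. destruct (Ceq_dec K 0) as [-> | HK].
  - rewrite Cmult_0_l. apply (is_series_C_unique (fun _ => 0)); [|exact is_series_C_zero].
    refine (is_series_ext _ _ _ _ HL). intros n. apply Cmult_0_l.
  - assert (Ht : is_series (hyp_term a b z) (/ K * L)).
    { refine (is_series_ext _ _ _ _ (is_series_scal (/ K) _ _ HL)).
      intros n. change (/ K * (K * hyp_term a b z n) = hyp_term a b z n). field. exact HK. }
    rewrite (pFq_eq _ _ _ _ Ht). field. exact HK.
Qed.

Lemma is_series_fold_sum (f : nat -> nat -> C) (l : nat -> C) (ks : list nat) :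
  (forall k, is_series (f k) (l k)) ->
  is_series (fun n => fold_right Cplus 0 (map (fun k => f k n) ks))
            (fold_right Cplus 0 (map l ks)).
Proof.
  intros Hf. induction ks as [|k ks IH]; cbn [map fold_right].
  - exact is_series_C_zero.
  - exact (is_series_plus _ _ _ _ (Hf k) IH).
Qed.

Lemma mod_neq_in_block (N r i m : nat) : (0 < i < N)%nat -> ((N * m + r + i) mod N <> r)%nat.
Proof.
  intros Hi E.
  pose proof (Nat.div_mod_eq (N * m + r + i) N) as Hdiv. rewrite E in Hdiv.
  set (d := ((N * m + r + i) / N)%nat) in Hdiv.
  destruct (Nat.le_gt_cases d m) as [Hd | Hd].
  - assert (N * d <= N * m)%nat by (apply Nat.mul_le_mono_l; exact Hd). lia.
  - assert (N * S m <= N * d)%nat by (apply Nat.mul_le_mono_l; exact Hd). lia.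
Qed.

Lemma sum_n_zero_tail (U : nat -> C) (n k : nat) :
  (forall i, (0 < i <= k)%nat -> U (n + i)%nat = 0) -> sum_n U (n + k) = sum_n U n.
Proof.
  intros HU. induction k as [|k IH].
  - rewrite Nat.add_0_r. reflexivity.
  - rewrite Nat.add_succ_r, sum_Sn, IH by (intros; apply HU; lia).
    rewrite <- Nat.add_succ_r, HU by lia. apply Cplus_0_r.
Qed.

Lemma is_series_residue_class (U : nat -> C) (N r : nat) (L : C) :
  (r < N)%nat -> (forall n, (n mod N <> r)%nat -> U n = 0) ->
  is_series U L -> is_series (fun m => U (N * m + r)%nat) L.
Proof.
  intros Hr HU HL.
  assert (Hpartial : forall m, sum_n (fun m => U (N * m + r)%nat) m = sum_n U (N * m + r)).
  { induction m as [|m IH].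
    - rewrite sum_O, Nat.mul_0_r, Nat.add_0_l.
      destruct r as [|r]; [rewrite sum_O; reflexivity|].
      assert (Hinit : sum_n U r = (0 : C)).
      { rewrite <- (Nat.add_0_l r), sum_n_zero_tail, sum_O.
        - apply HU. rewrite Nat.Div0.mod_0_l. lia.
        - intros i Hi. apply HU. rewrite Nat.mod_small; lia. }
      rewrite sum_Sn, Hinit. symmetry. apply Cplus_0_l.
    - rewrite sum_Sn, IH.
      replace (N * S m + r)%nat with (S (N * m + r + (N - 1)))%nat by lia.
      rewrite sum_Sn, (sum_n_zero_tail U (N * m + r) (N - 1)); [reflexivity|].
      intros i Hi. apply HU, mod_neq_in_block. lia. }
  unfold is_series.
  apply (filterlim_ext (fun m => sum_n U (N * m + r))).
  { intros m. symmetry. apply Hpartial. }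
  apply (filterlim_comp _ _ _ (fun m => N * m + r)%nat (sum_n U) eventually eventually);
    [|exact HL].
  intros P [M HM]. exists M. intros n Hn. apply HM. nia.
Qed.

Lemma prodC_cons (x : C) (l : list C) : prodC (x :: l) = x * prodC l.
Proof. reflexivity. Qed.

Lemma prodC_app (l1 l2 : list C) : prodC (l1 ++ l2) = prodC l1 * prodC l2.
Proof.
  induction l1 as [|x l1 IH]; cbn [app].
  - symmetry. apply Cmult_1_l.
  - rewrite !prodC_cons, IH. apply Cmult_assoc.
Qed.

Lemma prodC_map_mult {A : Type} (f g : A -> C) (l : list A) :
  prodC (map (fun x => f x * g x) l) = prodC (map f l) * prodC (map g l).
Proof.
  induction l as [|x l IH]; cbn [map].
  - symmetry. apply Cmult_1_l.
  - rewrite !prodC_cons, IH. ring.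
Qed.

Lemma prodC_map_const {A : Type} (c : C) (l : list A) :
  prodC (map (fun _ => c) l) = Cpow c (length l).
Proof.
  induction l as [|x l IH]; cbn [map length]; [reflexivity|].
  rewrite prodC_cons, IH. reflexivity.
Qed.

Lemma prodC_map_scal {A : Type} (c : C) (f : A -> C) (l : list A) :
  prodC (map (fun x => c * f x) l) = Cpow c (length l) * prodC (map f l).
Proof. rewrite (prodC_map_mult (fun _ => c)), prodC_map_const. reflexivity. Qed.

Lemma prodC_flat_map {A B : Type} (f : B -> C) (g : A -> list B) (l : list A) :
  prodC (map f (flat_map g l)) = prodC (map (fun x => prodC (map f (g x))) l).
Proof.
  induction l as [|x l IH]; cbn [flat_map map]; [reflexivity|].
  rewrite map_app, prodC_app, prodC_cons, IH. reflexivity.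
Qed.

Lemma prodC_neq_0 (l : list C) : (forall x, In x l -> x <> 0) -> prodC l <> 0.
Proof.
  induction l as [|x l IH]; intros Hl.
  - exact C1_nz.
  - rewrite prodC_cons. apply Cmult_neq_0.
    + apply Hl. left. reflexivity.
    + apply IH. intros y Hy. apply Hl. right. exact Hy.
Qed.

Lemma poch_add (u : C) (m n : nat) : poch u (m + n) = poch u m * poch (u + INR m) n.
Proof.
  induction n as [|n IH].
  - rewrite Nat.add_0_r. symmetry. apply Cmult_1_r.
  - rewrite Nat.add_succ_r. cbn [poch]. rewrite IH, plus_INR, RtoC_plus. ring.
Qed.

Lemma poch_eq_prodC (u : C) (n : nat) :
  poch u n = prodC (map (fun j => u + INR j) (seq 0 n)).
Proof.
  induction n as [|n IH]; [reflexivity|].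
  rewrite seq_S, map_app, prodC_app, <- IH. cbn. ring.
Qed.

Lemma poch_mul (u : C) (N m : nat) : (0 < N)%nat ->
  poch u (N * m) =
  Cpow (INR N) (N * m) * prodC (map (fun j => poch ((u + INR j) / INR N) m) (seq 0 N)).
Proof.
  intros HN. assert (HN0 : RtoC (INR N) <> 0) by (apply RtoC_neq_0, not_0_INR; lia).
  induction m as [|m IH].
  - rewrite Nat.mul_0_r. cbn [poch]. rewrite prodC_map_const, Cpow_1_l. ring.
  - assert (Hblock : prodC (map (fun j => u + INR (N * m) + INR j) (seq 0 N)) =
                      Cpow (INR N) N * prodC (map (fun j => (u + INR j) / INR N + INR m) (seq 0 N))).
    { rewrite (map_ext (fun j => u + INR (N * m) + INR j)
                       (fun j => INR N * ((u + INR j) / INR N + INR m))).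
      - rewrite prodC_map_scal, length_seq. reflexivity.
      - intros j. rewrite mult_INR, RtoC_mult. field. exact HN0. }
    rewrite Nat.mul_succ_r, poch_add, IH, Cpow_add_r, poch_eq_prodC, Hblock.
    cbn [poch]. rewrite prodC_map_mult. ring.
Qed.

Lemma fact_eq_poch (n : nat) : RtoC (INR (fact n)) = poch 1 n.
Proof.
  induction n as [|n IH]; [reflexivity|].
  cbn [poch]. rewrite <- IH, fact_simpl, mult_INR, RtoC_mult, RtoC_INR_S. ring.
Qed.

Lemma poch_neq_0 (u : C) (n : nat) : (forall m : nat, u <> - INR m) -> poch u n <> 0.
Proof.
  intros Hu. induction n as [|n IH]; [exact C1_nz|].
  cbn [poch]. apply Cmult_neq_0; [exact IH|].
  intros E. exact (Hu n (Cplus_eq_0_opp _ _ E)).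
Qed.

Lemma shift5_eq (u : C) : shift5 u = map (fun j => (u + INR 2 + INR j) / INR 5) (seq 0 5).
Proof.
  unfold shift5. cbn [seq map]. rewrite !RtoC_INR_S, INR_0.
  repeat match goal with |- _ :: _ = _ :: _ => f_equal end; f_equal; ring.
Qed.

Lemma poch_5m2 (u : C) (m : nat) :
  poch u (5 * m + 2) =
  poch u 2 * (Cpow 5 (5 * m) * prodC (map (fun v => poch v m) (shift5 u))).
Proof.
  rewrite Nat.add_comm, poch_add, poch_mul, shift5_eq, map_map by lia.
  replace (INR 5) with 5%R by (cbn; ring). reflexivity.
Qed.

Lemma fact_5m2 (m : nat) :
  RtoC (INR (fact (5 * m + 2))) =
  2 * Cpow 5 (5 * m) * prodC (map (fun v => poch v m) [3/5; 4/5; 6/5; 7/5])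
  * RtoC (INR (fact m)).
Proof.
  rewrite !fact_eq_poch, poch_5m2. unfold shift5. cbn [map]. rewrite !prodC_cons.
  replace ((1 + 4) / 5) with (1 : C) by (field; exact C5_neq_0).
  replace ((1 + 2) / 5) with (3 / 5 : C) by (f_equal; ring).
  replace ((1 + 3) / 5) with (4 / 5 : C) by (f_equal; ring).
  replace ((1 + 5) / 5) with (6 / 5 : C) by (f_equal; ring).
  replace ((1 + 6) / 5) with (7 / 5 : C) by (f_equal; ring).
  cbn [poch]. rewrite RtoC_INR_S, INR_0. ring.
Qed.

Lemma prodC_poch_5m2 (l : list C) (m : nat) :
  prodC (map (fun u => poch u (5 * m + 2)) l) =
  prodC (map (fun u => poch u 2) l) *
  (Cpow (Cpow 5 (5 * m)) (length l) * prodC (map (fun v => poch v m) (flat_map shift5 l))).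
Proof.
  rewrite (map_ext _ _ (fun u => poch_5m2 u m)), !prodC_map_mult, prodC_map_const,
    prodC_flat_map.
  reflexivity.
Qed.

Lemma alpha_eq : alpha = (cos (2 * PI / 5), sin (2 * PI / 5))%R.
Proof.
  unfold alpha, Cexp. cbn [Re Im fst snd]. rewrite exp_0.
  apply injective_projections; cbn; ring.
Qed.

Lemma Cpow_cos_sin (t : R) (n : nat) :
  Cpow (cos t, sin t)%R n = (cos (INR n * t), sin (INR n * t))%R.
Proof.
  induction n as [|n IH].
  - cbn. rewrite Rmult_0_l, cos_0, sin_0. reflexivity.
  - rewrite Cpow_S, IH, S_INR, Rmult_plus_distr_r, Rmult_1_l, Rplus_comm, cos_plus, sin_plus.
    apply injective_projections; cbn; ring.
Qed.

Lemma cos_sin_neq_1 (t : R) : (0 < t < 2 * PI)%R -> ((cos t, sin t)%R : C) <> 1.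
Proof.
  intros Ht E.
  assert (Hsin : sin t = 0%R) by (apply (f_equal snd) in E; exact E).
  assert (Hcos : cos t = 1%R) by (apply (f_equal fst) in E; exact E).
  destruct (Rtotal_order t PI) as [Hlt | [-> | Hgt]].
  - pose proof (sin_gt_0 t (proj1 Ht) Hlt). lra.
  - rewrite cos_PI in Hcos. lra.
  - pose proof (sin_lt_0 t Hgt (proj2 Ht)). lra.
Qed.

Lemma Cmod_alpha : Cmod alpha = 1%R.
Proof.
  rewrite alpha_eq. unfold Cmod. cbn [fst snd].
  rewrite <- sqrt_1. f_equal.
  pose proof (sin2_cos2 (2 * PI / 5)) as H. unfold Rsqr in H. nra.
Qed.

Lemma alpha_pow_5 : Cpow alpha 5 = 1.
Proof.
  rewrite alpha_eq, Cpow_cos_sin.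
  replace (INR 5 * (2 * PI / 5))%R with (2 * PI)%R by (cbn; field).
  rewrite cos_2PI, sin_2PI. reflexivity.
Qed.

Lemma alpha_pow_mod (j : nat) : Cpow alpha j = Cpow alpha (j mod 5).
Proof.
  rewrite (Nat.div_mod_eq j 5) at 1.
  rewrite Cpow_add_r, Cpow_mult_r, alpha_pow_5, Cpow_1_l. apply Cmult_1_l.
Qed.

Lemma alpha_pow_neq_1 (j : nat) : (j mod 5 <> 0)%nat -> Cpow alpha j <> 1.
Proof.
  intros Hj. rewrite alpha_pow_mod, alpha_eq, Cpow_cos_sin. apply cos_sin_neq_1.
  assert (Hr : (1 <= INR (j mod 5) <= 4)%R).
  { split.
    - apply (le_INR 1). lia.
    - replace 4%R with (INR 4) by (cbn; ring). apply le_INR. lia. }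
  pose proof PI_RGT_0. nra.
Qed.

Lemma sum_pow_root_of_unity (beta : C) :
  Cpow beta 5 = 1 -> beta <> 1 ->
  fold_right Cplus 0 (map (fun k => Cpow beta k) (seq 0 5)) = 0.
Proof.
  intros H5 H1.
  set (s := fold_right Cplus 0 (map (fun k => Cpow beta k) (seq 0 5))).
  assert (Hgeom : (beta - 1) * s = Cpow beta 5 - 1) by (unfold s; cbn; ring).
  rewrite H5 in Hgeom.
  pose proof (Cminus_eq_contra _ _ H1) as Hb1.
  replace s with (/ (beta - 1) * ((beta - 1) * s)) by (field; exact Hb1).
  rewrite Hgeom. ring.
Qed.

Lemma sum_pow_alpha (j : nat) :
  fold_right Cplus 0 (map (fun k => Cpow (Cpow alpha j) k) (seq 0 5)) =
  if (j mod 5 =? 0)%nat then 5 else 0.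
Proof.
  destruct (Nat.eqb_spec (j mod 5) 0) as [Hj | Hj].
  - rewrite alpha_pow_mod, Hj. cbn. ring.
  - apply sum_pow_root_of_unity; [|exact (alpha_pow_neq_1 j Hj)].
    rewrite <- Cpow_mult_r, Nat.mul_comm, Cpow_mult_r, alpha_pow_5. apply Cpow_1_l.
Qed.

Lemma hyp_term_scale a b (w u : C) (n : nat) :
  hyp_term a b (w * u) n = hyp_term a b w n * Cpow u n.
Proof. unfold hyp_term. rewrite Cpow_mult_l. unfold Cdiv. ring. Qed.

Lemma sum_twisted_hyp_terms a b (w : C) (n : nat) :
  fold_right Cplus 0
    (map (fun k => Cpow alpha k * hyp_term a b (w * Cpow alpha (2 * k)) n) (seq 0 5)) =
  (if ((2 * n + 1) mod 5 =? 0)%nat then 5 else 0) * hyp_term a b w n.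
Proof.
  rewrite <- sum_pow_alpha.
  assert (Hterm : forall k, Cpow alpha k * hyp_term a b (w * Cpow alpha (2 * k)) n =
                            hyp_term a b w n * Cpow (Cpow alpha (2 * n + 1)) k).
  { intros k. rewrite hyp_term_scale, <- !Cpow_mult_r.
    replace ((2 * n + 1) * k)%nat with (k + 2 * k * n)%nat by lia.
    rewrite Cpow_add_r. ring. }
  rewrite (map_ext _ _ Hterm). cbn. ring.
Qed.

Lemma is_lim_seq_inv_S : is_lim_seq (fun n => / INR (S n))%R 0%R.
Proof.
  replace (Finite 0) with (Rbar_inv p_infty) by reflexivity.
  apply is_lim_seq_inv; [|discriminate].
  apply (is_lim_seq_incr_1 INR p_infty), is_lim_seq_INR.
Qed.

Lemma is_lim_seq_inv_S_pow (k : nat) : is_lim_seq (fun n => (/ INR (S n)) ^ k)%R (0 ^ k)%R.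
Proof.
  induction k as [|k IH]; cbn [pow].
  - apply is_lim_seq_const.
  - apply is_lim_seq_mult'; [exact is_lim_seq_inv_S | exact IH].
Qed.

Lemma is_lim_seq_shift_ratio (u : C) :
  is_lim_seq (fun n => Cmod (u + INR n) / INR (S n))%R 1%R.
Proof.
  set (K := Cmod (u - 1)).
  apply is_lim_seq_le_le with (u := fun n => (1 - K * / INR (S n))%R)
                              (w := fun n => (1 + K * / INR (S n))%R).
  - intros n.
    assert (Hs : (0 < INR (S n))%R) by (apply lt_0_INR; lia).
    assert (Hdist : (Rabs (Cmod (u + INR n) - INR (S n)) <= K)%R).
    { replace (INR (S n)) with (Cmod (INR (S n))) at 1
        by (rewrite Cmod_R; apply Rabs_pos_eq; lra).
      unfold K. replace (u - 1) with (minus (u + INR n) (RtoC (INR (S n))) : C)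
        by (rewrite RtoC_INR_S; unfold minus, plus, opp; cbn; ring).
      apply (norm_triangle_inv (V := C_NormedModule)). }
    apply Rabs_le_between in Hdist.
    pose proof (Rinv_r (INR (S n)) ltac:(lra)). pose proof (Rinv_0_lt_compat _ Hs).
    unfold Rdiv. split; nra.
  - replace 1%R with (1 - K * 0)%R at 1 by ring.
    apply is_lim_seq_minus'; [apply is_lim_seq_const|].
    apply is_lim_seq_mult'; [apply is_lim_seq_const | exact is_lim_seq_inv_S].
  - replace 1%R with (1 + K * 0)%R at 1 by ring.
    apply is_lim_seq_plus'; [apply is_lim_seq_const|].
    apply is_lim_seq_mult'; [apply is_lim_seq_const | exact is_lim_seq_inv_S].
Qed.

Lemma is_lim_seq_prod_shift_ratio (l : list C) :
  is_lim_seq (fun n => Cmod (prodC (map (fun u => (u + INR n)%C) l)) / INR (S n) ^ length l)%R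
             1%R.
Proof.
  induction l as [|u l IH]; cbn [map length].
  - apply is_lim_seq_ext with (fun _ => 1%R); [|apply is_lim_seq_const].
    intros n. cbn. rewrite Cmod_1. field.
  - apply is_lim_seq_ext with
      (fun n => Cmod (u + INR n) / INR (S n) *
                (Cmod (prodC (map (fun u => (u + INR n)%C) l)) / INR (S n) ^ length l))%R.
    + intros n. assert (Hs : (INR (S n) <> 0)%R) by (apply not_0_INR; lia).
      rewrite prodC_cons, Cmod_mult. cbn [pow]. field. split; [apply pow_nonzero|]; exact Hs.
    + replace 1%R with (1 * 1)%R by ring.
      apply is_lim_seq_mult'; [apply is_lim_seq_shift_ratio | exact IH].
Qed.

Lemma ex_series_ratio (t : nat -> C) (r : nat -> R) (L : R) :
  (forall n, Cmod (t (S n)) <= Cmod (t n) * r n)%R -> is_lim_seq r L -> (L < 1)%R ->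
  ex_series t.
Proof.
  intros Ht Hr HL.
  set (rho := ((Rmax L 0 + 1) / 2)%R).
  assert (Hrho : (0 <= rho < 1 /\ L < rho)%R) by (unfold rho, Rmax; destruct Rle_dec; lra).
  apply is_lim_seq_spec in Hr.
  destruct (Hr (mkposreal (rho - L) ltac:(lra))) as [N HN]. cbn in HN.
  assert (Hgeom : forall k, (Cmod (t (N + k)%nat) <= Cmod (t N) * rho ^ k)%R).
  { induction k as [|k IH].
    - rewrite Nat.add_0_r. cbn. lra.
    - assert (Hrk : (r (N + k)%nat <= rho)%R).
      { specialize (HN (N + k)%nat ltac:(lia)). apply Rabs_lt_between in HN. lra. }
      rewrite Nat.add_succ_r. apply (Rle_trans _ _ _ (Ht _)). cbn [pow].
      apply Rle_trans with (Cmod (t (N + k)%nat) * rho)%R.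
      + apply Rmult_le_compat_l; [apply Cmod_ge_0 | exact Hrk].
      + rewrite (Rmult_comm rho), <- Rmult_assoc. apply Rmult_le_compat_r; lra. }
  apply (ex_series_incr_n t N).
  apply (ex_series_le (V := C_CompleteNormedModule) _ (fun k => Cmod (t N) * rho ^ k)%R).
  - intros k. exact (Hgeom k).
  - apply (ex_series_scal (K := R_AbsRing) (V := R_NormedModule)).
    apply ex_series_geom. rewrite Rabs_pos_eq; lra.
Qed.

Section HypergeometricTerms.

Variables a b : list C.
Hypothesis b_not_nonpos_int : forall bi, In bi b -> forall n : nat, bi <> - RtoC (INR n).

Lemma prodC_shift_b_neq_0 (n : nat) : prodC (map (fun u => u + INR n) b) <> 0.
Proof.
  apply prodC_neq_0. intros y Hy. apply in_map_iff in Hy. destruct Hy as [bi [<- Hbi]].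
  intros E. exact (b_not_nonpos_int bi Hbi n (Cplus_eq_0_opp _ _ E)).
Qed.

Lemma prodC_poch_b_neq_0 (n : nat) : prodC (map (fun u => poch u n) b) <> 0.
Proof.
  apply prodC_neq_0. intros y Hy. apply in_map_iff in Hy. destruct Hy as [bi [<- Hbi]].
  apply poch_neq_0, b_not_nonpos_int, Hbi.
Qed.

Lemma hyp_term_S (z : C) (n : nat) :
  hyp_term a b z (S n) =
  hyp_term a b z n *
  (z * prodC (map (fun u => u + INR n) a) / prodC (map (fun u => u + INR n) b) / INR (S n)).
Proof.
  assert (Hs : RtoC (INR (S n)) <> 0) by (apply RtoC_neq_0, not_0_INR; lia).
  assert (Hfact : RtoC (INR (fact n)) <> 0) by (apply RtoC_neq_0, INR_fact_neq_0).
  pose proof (prodC_poch_b_neq_0 n). pose proof (prodC_shift_b_neq_0 n).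
  unfold hyp_term. cbn [poch]. rewrite !prodC_map_mult, fact_simpl, mult_INR, RtoC_mult, Cpow_S.
  field. auto.
Qed.

Lemma ex_series_hyp_term (z : C) :
  (length a <= length b)%nat \/ (length a = S (length b) /\ (Cmod z < 1)%R) ->
  ex_series (hyp_term a b z).
Proof.
  intros Hlen.
  set (p := length a). set (q := length b). set (k := (S q - p)%nat).
  assert (Hk : (p + k = S q)%nat) by (unfold k, p, q; destruct Hlen as [H | [H _]]; lia).
  apply (ex_series_ratio _
    (fun n => Cmod (z * prodC (map (fun u => u + INR n) a) /
                    prodC (map (fun u => u + INR n) b) / INR (S n))))
    with (L := (Cmod z * 1 / 1 * 0 ^ k)%R).
  - intros n. rewrite hyp_term_S, Cmod_mult. apply Rle_refl.
  - apply is_lim_seq_ext with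
      (fun n => Cmod z * (Cmod (prodC (map (fun u => (u + INR n)%C) a)) / INR (S n) ^ p)
                / (Cmod (prodC (map (fun u => (u + INR n)%C) b)) / INR (S n) ^ q)
                * (/ INR (S n)) ^ k)%R.
    + intros n. set (s := INR (S n)).
      assert (Hs : (0 < s)%R) by (apply lt_0_INR; lia).
      assert (HB : Cmod (prodC (map (fun u => u + INR n) b)) <> 0%R).
      { intros E. apply Cmod_eq_0 in E. exact (prodC_shift_b_neq_0 n E). }
      assert (Hsk : (s ^ k = s * s ^ q / s ^ p)%R).
      { assert (Hpow : (s ^ p * s ^ k = s * s ^ q)%R) by (rewrite <- pow_add, Hk; reflexivity).
        rewrite <- Hpow. field. apply pow_nonzero. lra. }
      rewrite Cmod_div, Cmod_div, Cmod_mult, Cmod_R, Rabs_pos_eq by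
        (try apply prodC_shift_b_neq_0; try apply RtoC_neq_0; lra).
      fold s. rewrite pow_inv, Hsk. field.
      repeat split; try apply pow_nonzero; lra.
    + apply is_lim_seq_mult'; [|apply is_lim_seq_inv_S_pow].
      apply is_lim_seq_div'; [|apply is_lim_seq_prod_shift_ratio | lra].
      apply is_lim_seq_mult'; [apply is_lim_seq_const | apply is_lim_seq_prod_shift_ratio].
  - destruct k as [|k'] eqn:Ek.
    + destruct Hlen as [H | [_ H]]; [unfold k, p, q in Ek; lia|]. cbn. lra.
    + cbn. lra.
Qed.

Lemma hyp_term_5m2 (w : C) (m : nat) : (length a <= S (length b))%nat ->
  5 * hyp_term a b w (5 * m + 2) =
  5 * Cpow w 2 / 2
  * (prodC (map (fun ai => poch ai 2) a) / prodC (map (fun bi => poch bi 2) b))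
  * hyp_term (flat_map shift5 a) ([3/5; 4/5; 6/5; 7/5] ++ flat_map shift5 b)
      (Cpow (w / Cpow 5 (S (length b) - length a)) 5) m.
Proof.
  intros Hlen.
  set (k := (S (length b) - length a)%nat).
  set (E := Cpow 5 (5 * m)).
  assert (HE : E <> 0) by (apply Cpow_nz, C5_neq_0).
  assert (Harg : Cpow (Cpow (w / Cpow 5 k) 5) m = Cpow w (5 * m) / Cpow E k).
  { rewrite <- Cpow_mult_r, Cpow_div by (apply Cpow_nz, C5_neq_0).
    unfold E. rewrite <- !Cpow_mult_r, (Nat.mul_comm k). reflexivity. }
  assert (HEk : Cpow E k = E * Cpow E (length b) / Cpow E (length a)).
  { rewrite <- Cpow_S. apply Cpow_add_div; [exact HE | unfold k; lia]. }
  pose proof (prodC_poch_b_neq_0 (5 * m + 2)) as Hb.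
  rewrite prodC_poch_5m2 in Hb. fold E in Hb.
  apply Cmult_neq_0_inv in Hb as [Hb2 Hb]. apply Cmult_neq_0_inv in Hb as [_ Hbm].
  pose proof (RtoC_neq_0 _ (INR_fact_neq_0 (5 * m + 2))) as Hfact.
  rewrite fact_5m2 in Hfact. fold E in Hfact.
  apply Cmult_neq_0_inv in Hfact as [Hfact Hm]. apply Cmult_neq_0_inv in Hfact as [_ Hq].
  unfold hyp_term.
  rewrite !prodC_poch_5m2, fact_5m2, map_app, prodC_app, Harg, HEk,
    (Nat.add_comm (5 * m) 2), Cpow_add_r.
  fold E. field.
  repeat split; try apply Cpow_nz; auto. apply RtoC_neq_0. lra.
Qed.

End HypergeometricTerms.

Lemma is_series_roots_of_unity_filter a b (w : C) :
  (forall k, ex_series (hyp_term a b (w * Cpow alpha (2 * k)))) ->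
  is_series (fun m => 5 * hyp_term a b w (5 * m + 2))
    (fold_right Cplus 0
       (map (fun k => Cpow alpha k * pFq a b (w * Cpow alpha (2 * k))) (seq 0 5))).
Proof.
  intros Hconv.
  set (weight (n : nat) := if ((2 * n + 1) mod 5 =? 0)%nat then (5 : C) else 0).
  apply (is_series_ext (fun m => weight (5 * m + 2)%nat * hyp_term a b w (5 * m + 2))).
  { intros m. unfold weight.
    replace ((2 * (5 * m + 2) + 1) mod 5 =? 0)%nat with true
      by (symmetry; apply Nat.eqb_eq; lia).
    reflexivity. }
  apply (is_series_residue_class (fun n => weight n * hyp_term a b w n)); [lia | |].
  - intros n Hn. unfold weight.
    replace ((2 * n + 1) mod 5 =? 0)%nat with false by (symmetry; apply Nat.eqb_neq; lia).
    apply Cmult_0_l.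
  - apply (is_series_ext _ _ _ (sum_twisted_hyp_terms a b w)).
    apply (is_series_fold_sum
             (fun k n => Cpow alpha k * hyp_term a b (w * Cpow alpha (2 * k)) n)).
    intros k. apply (is_series_scal (K := C_AbsRing) (V := C_NormedModule) (Cpow alpha k)).
    apply is_series_pFq, Hconv.
Qed.

Lemma powerRZ_5_eq (p q : nat) : (p <= S q)%nat ->
  RtoC (powerRZ 5 (1 + Z.of_nat q - Z.of_nat p)) = Cpow 5 (S q - p).
Proof.
  intros H. replace (1 + Z.of_nat q - Z.of_nat p)%Z with (Z.of_nat (S q - p)) by lia.
  rewrite <- pow_powerRZ, RtoC_pow. reflexivity.
Qed.

Lemma twisted_arg (c x : C) (k : nat) :
  c * Cpow (x * Cpow alpha k) 2 = c * Cpow x 2 * Cpow alpha (2 * k).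
Proof. rewrite Cpow_mult_l, (Nat.mul_comm 2 k), Cpow_mult_r. ring. Qed.

Theorem theorem8 (c x : C) (a b : list C) :
  (forall bi, In bi b -> forall n : nat, bi <> - RtoC (INR n)) ->
  ((5 * length a <= 5 * length b + 4)%nat \/
   (length a = S (length b) /\
    (Cmod (Cpow (c * Cpow x 2 /
      RtoC (powerRZ 5 (1 + Z.of_nat (length b) - Z.of_nat (length a)))) 5)
      < 1)%R)) ->
  fold_right Cplus 0
    (map (fun k : nat => Cpow alpha k * pFq a b (c * Cpow (x * Cpow alpha k) 2))
       (seq 0 5))
  = 5 * Cpow c 2 * Cpow x 4 / 2
    * (prodC (map (fun ai => poch ai 2) a) / prodC (map (fun bi => poch bi 2) b))
    * pFq (flat_map shift5 a)
          ([3/5; 4/5; 6/5; 7/5] ++ flat_map shift5 b)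
          (Cpow (c * Cpow x 2 /
             RtoC (powerRZ 5 (1 + Z.of_nat (length b) - Z.of_nat (length a)))) 5).
Proof.
  intros Hb Hcase.
  assert (Hlen : (length a <= S (length b))%nat) by (destruct Hcase as [H | [H _]]; lia).
  rewrite powerRZ_5_eq in * by exact Hlen.
  rewrite (map_ext _ _ (fun k => f_equal (fun z => Cpow alpha k * pFq a b z) (twisted_arg c x k))).
  set (w := c * Cpow x 2) in *.
  assert (Hconv : forall k, ex_series (hyp_term a b (w * Cpow alpha (2 * k)))).
  { intros k. apply ex_series_hyp_term; [exact Hb|].
    rewrite Cmod_mult, Cmod_pow, Cmod_alpha, pow1, Rmult_1_r.
    destruct Hcase as [H | [Hp Hw]]; [left; lia | right; split; [exact Hp|]].
    rewrite Hp, Nat.sub_diag in Hw.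
    replace (w / Cpow 5 0) with w in Hw by (cbn [Cpow]; field; exact C1_nz).
    exact (Cmod_lt_1_of_pow w 5 Hw). }
  replace (5 * Cpow c 2 * Cpow x 4 / 2) with (5 * Cpow w 2 / 2) by (unfold w, Cdiv; ring).
  apply pFq_of_scaled_series.
  refine (is_series_ext _ _ _ (fun m => hyp_term_5m2 a b Hb w m Hlen) _).
  exact (is_series_roots_of_unity_filter a b w Hconv).
Qed.
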